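(* For every integer $j\ge 1$ the following identities hold (in each sum the $m=0$ term uses $\zeta(0)=-\tfrac12$): (a) $\displaystyle (3^{1-2j}-1)\zeta(2j)=\frac{(-1)^j j(2\pi)^{2j}}{(2j)!\,3^{2j-1}}+(-1)^{j+1}(2\pi)^{2j}\sum_{m=0}^{j}\frac{(-1)^{m+1}}{(2j-2m)!\,2^{2m-1}\,3^{2j-2m}\,\pi^{2m}}\zeta(2m)$; (b) $\displaystyle (4^{1-2j}-2^{1-2j})\zeta(2j)=\frac{(-1)^j j(2\pi)^{2j}}{(2j)!\,4^{2j-1}}+(-1)^{j+1}(2\pi)^{2j}\sum_{m=0}^{j}\frac{(-1)^{m+1}}{(2j-2m)!\,2^{2m-1}\,4^{2j-2m}\,\pi^{2m}}\zeta(2m)$; (c) $\displaystyle (6^{1-2j}-3^{1-2j}-2^{1-2j}+1)\zeta(2j)=\frac{(-1)^j j(2\pi)^{2j}}{(2j)!\,6^{2j-1}}+(-1)^{j+1}(2\pi)^{2j}\sum_{m=0}^{j}\frac{(-1)^{m+1}}{(2j-2m)!\,2^{2m-1}\,6^{2j-2m}\,\pi^{2m}}\zeta(2m)$; (d) $\displaystyle -\frac{j}{12^{2j-1}}(1+7^{2j-1})+\sum_{m=0}^{j}\frac{(2j)!}{(2j-2m)!}\frac{(-1)^{m+1}}{2^{2m-1}\pi^{2m}}(1+7^{2j-2m})\frac{\zeta(2m)}{12^{2j-2m}}=\frac{(6^{1-2j}-3^{1-2j}-2^{1-2j}+1)(2j)!(-1)^{j+1}}{2^{4j-1}\pi^{2j}}\zeta(2j)$;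 (e) $\displaystyle -\frac{j}{8^{2j-1}}(1+5^{2j-1})+\sum_{m=0}^{j}\frac{(2j)!}{(2j-2m)!}\frac{(-1)^{m+1}}{2^{2m-1}\pi^{2m}}(1+5^{2j-2m})\frac{\zeta(2m)}{8^{2j-2m}}=\frac{(4^{1-2j}-2^{1-2j})(2j)!(-1)^{j+1}}{2^{4j-1}\pi^{2j}}\zeta(2j)$.
   Context: $\zeta$ denotes the Riemann zeta function (analytically continued), so $\zeta(0)=-1/2$. *)

From Stdlib Require Import Reals Lra Lia ZArith ClassicalEpsilon.
Open Scope R_scope.

(* Value of the Dirichlet series sum_{n>=1} 1/n^s for a natural exponent s
   (the actual sum when s >= 2, chosen via classical choice as the unique
   limit of the partial sums). *)
Definition zeta_series (s : nat) : R :=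
  epsilon (inhabits 0) (fun l => infinite_sum (fun n => / (INR (S n)) ^ s) l).

(* Riemann zeta at nonnegative even integers 2m: zeta(0) = -1/2 (value of the
   analytic continuation, as fixed by the paper), zeta(2m) = sum 1/n^(2m) for m >= 1. *)
Definition zeta_even (m : nat) : R :=
  match m with
  | O => - / 2
  | S _ => zeta_series (2 * m)
  end.

Definition zpow (a : R) (k : Z) : R := powerRZ a k.

From Stdlib Require Import Reals ZArith Lra Lia Factorial ClassicalEpsilon.
From Coquelicot Require Import Coquelicot.
Open Scope R_scope.

(* Euler's formula zeta(2m) = (-1)^(m+1) B_(2m) (2 pi)^(2m) / (2 (2m)!), valid also for
   m = 0 with zeta(0) = -1/2, turns each sum of the statement into
   sum_m C(2j,2m) B_(2m) y^(2j-2m) = B_(2j)(y) + j y^(2j-1) at y = 1/q, so every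
   identity reduces to a value of the Bernoulli polynomial B_(2j) at 1/2, 1/3, 1/4, 1/6,
   or of B_(2j)(1/12) + B_(2j)(7/12) and B_(2j)(1/8) + B_(2j)(5/8).  These follow from
   the multiplication theorem r B_n(r x) = r^n sum_(k<r) B_n(x + k/r) for r = 2, 3 and
   the reflection B_n(1 - x) = (-1)^n B_n(x).
   Euler's formula comes from integrating B_(2k+2)(x) - B_(2k+2) against the Dirichlet
   kernel 1/2 + sum_(i<=N) cos(2 pi (i+1) x): integrating by parts gives the cosine
   coefficients (-1)^k (2k+2)! / (2 pi (i+1))^(2k+2), and the integral tends to 0 as
   N grows, by a Riemann-Lebesgue estimate away from the endpoints and a uniform
   bound near them. *)

(** * Bernoulli numbers and polynomials *)

(* [bernoulli_table n k] is the Bernoulli number B_k for k <= n; the new entry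
   B_(p+1) is solved from sum_(i <= p+1) C(p+2, i) B_i = 0. *)
Fixpoint bernoulli_table (n : nat) : nat -> R :=
  match n with
  | O => fun _ => 1
  | S p => fun k => if (k <=? p)%nat then bernoulli_table p k
      else - / INR (S (S p)) *
           sum_f_R0 (fun i => Binomial.C (S (S p)) i * bernoulli_table p i) p
  end.

Definition bernoulli (n : nat) : R := bernoulli_table n n.

Lemma bernoulli_table_S p k : bernoulli_table (S p) k =
  if (k <=? p)%nat then bernoulli_table p k
  else - / INR (S (S p)) *
       sum_f_R0 (fun i => Binomial.C (S (S p)) i * bernoulli_table p i) p.
Proof. reflexivity. Qed.

Lemma bernoulli_tableE n k : (k <= n)%nat -> bernoulli_table n k = bernoulli k.
Proof.
  induction n as [|n IHn]; intro Hk.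
  - replace k with 0%nat by lia. reflexivity.
  - rewrite bernoulli_table_S. destruct (Nat.leb_spec k n).
    + apply IHn; lia.
    + replace k with (S n) by lia. unfold bernoulli. rewrite bernoulli_table_S.
      rewrite (proj2 (Nat.leb_gt (S n) n)) by lia. reflexivity.
Qed.

Lemma bernoulli_S p : bernoulli (S p) =
  - / INR (S (S p)) * sum_f_R0 (fun i => Binomial.C (S (S p)) i * bernoulli i) p.
Proof.
  unfold bernoulli at 1. rewrite bernoulli_table_S, (proj2 (Nat.leb_gt (S p) p)) by lia.
  f_equal. apply sum_eq. intros i Hi. rewrite bernoulli_tableE by lia. reflexivity.
Qed.

Lemma binomial_diag n : Binomial.C n n = 1.
Proof.
  unfold Binomial.C. rewrite Nat.sub_diag. simpl (INR (fact 0)).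
  field. apply INR_fact_neq_0.
Qed.

Lemma binomial_1 n : Binomial.C (S n) 1 = INR (S n).
Proof.
  unfold Binomial.C. replace (S n - 1)%nat with n by lia.
  rewrite fact_simpl, mult_INR. simpl (INR (fact 1)). field. apply INR_fact_neq_0.
Qed.

Lemma binomial_pred n : Binomial.C (S n) n = INR (S n).
Proof.
  rewrite Binomial.pascal_step1 by lia. replace (S n - n)%nat with 1%nat by lia.
  apply binomial_1.
Qed.

Lemma binomial_mul_sub n k : (k <= n)%nat ->
  Binomial.C (S n) k * INR (S n - k) = INR (S n) * Binomial.C n k.
Proof.
  intro Hk. rewrite Binomial.pascal_step2 by lia. field. apply not_0_INR. lia.
Qed.

Lemma bernoulli_recurrence p :
  sum_f_R0 (fun k => Binomial.C (S (S p)) k * bernoulli k) (S p) = 0.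
Proof.
  simpl (sum_f_R0 _ (S p)). rewrite binomial_pred, bernoulli_S.
  field. apply not_0_INR. lia.
Qed.

Lemma bernoulli_1 : bernoulli 1 = - / 2.
Proof. rewrite bernoulli_S. simpl. unfold Binomial.C, bernoulli. simpl. field. Qed.

Definition bernoulli_poly (n : nat) (x : R) : R :=
  sum_f_R0 (fun k => Binomial.C n k * bernoulli k * x ^ (n - k)) n.

Lemma bernoulli_poly_0 x : bernoulli_poly 0 x = 1.
Proof. unfold bernoulli_poly, bernoulli, Binomial.C. simpl. field. Qed.

Lemma bernoulli_poly_at0 n : bernoulli_poly n 0 = bernoulli n.
Proof.
  unfold bernoulli_poly. destruct n as [|n].
  - unfold Binomial.C. simpl. field.
  - rewrite tech5, Nat.sub_diag, binomial_diag, sum_eq_R0; [simpl; ring|].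
    intros k Hk. replace (S n - k)%nat with (S (n - k)) by lia. simpl. ring.
Qed.

Lemma bernoulli_poly_at1 n : (2 <= n)%nat -> bernoulli_poly n 1 = bernoulli n.
Proof.
  intro Hn. destruct n as [|[|p]]; try lia. unfold bernoulli_poly.
  rewrite tech5, binomial_diag, Nat.sub_diag,
    (sum_eq _ (fun k => Binomial.C (S (S p)) k * bernoulli k)).
  - rewrite bernoulli_recurrence. simpl. ring.
  - intros k _. rewrite pow1. ring.
Qed.

Lemma is_derive_sum_f_R0 (f : nat -> R -> R) (df : nat -> R) n x :
  (forall k, (k <= n)%nat -> is_derive (f k) x (df k)) ->
  is_derive (fun y => sum_f_R0 (fun k => f k y) n) x (sum_f_R0 df n).
Proof.
  intro Hf. rewrite <- sum_n_Reals.
  apply (is_derive_ext (fun y => sum_n (fun k => f k y) n)).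
  - intro y. apply sum_n_Reals.
  - exact (is_derive_sum_n f n x df Hf).
Qed.

Lemma is_derive_bernoulli_poly n x :
  is_derive (bernoulli_poly (S n)) x (INR (S n) * bernoulli_poly n x).
Proof.
  set (g k := Binomial.C (S n) k * bernoulli k * (INR (S n - k) * x ^ pred (S n - k))).
  replace (INR (S n) * bernoulli_poly n x) with (sum_f_R0 g (S n)).
  - apply (is_derive_sum_f_R0
      (fun k y => Binomial.C (S n) k * bernoulli k * y ^ (S n - k))).
    intros k _. unfold g. set (m := (S n - k)%nat). auto_derive; auto. ring.
  - unfold g, bernoulli_poly. rewrite tech5, Nat.sub_diag, scal_sum.
    simpl (INR 0). rewrite Rmult_0_l, Rmult_0_r, Rplus_0_r.
    apply sum_eq. intros k Hk. replace (pred (S n - k)) with (n - k)%nat by lia.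
    transitivity (Binomial.C (S n) k * INR (S n - k) * bernoulli k * x ^ (n - k));
      [ring|].
    rewrite binomial_mul_sub by lia. ring.
Qed.

Lemma ex_derive_bernoulli_poly n x : ex_derive (bernoulli_poly n) x.
Proof.
  destruct n as [|n].
  - apply (ex_derive_ext (fun _ => 1)); [intro; symmetry; apply bernoulli_poly_0|].
    apply ex_derive_const.
  - eexists. apply is_derive_bernoulli_poly.
Qed.

Lemma Derive_bernoulli_poly n x :
  Derive (bernoulli_poly (S n)) x = INR (S n) * bernoulli_poly n x.
Proof. apply is_derive_unique, is_derive_bernoulli_poly. Qed.

Lemma is_derive_const_diff f d a b : (forall x, is_derive f x d) -> f b - f a = d * (b - a).
Proof.
  intro Hf. destruct (MVT_gen f a b (fun _ => d)) as [c [_ Hc]]; auto.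
  intros x _. apply derivable_continuous_pt. exists d. apply is_derive_Reals, Hf.
Qed.

(* Every identity between Bernoulli polynomials below is proved by the same
   Appell-sequence argument: the defect F_n vanishes for n = 0, satisfies
   F_(n+1)' = c_n F_n, and F_(n+2) takes the same value at 0 and at a <> 0. *)
Lemma appell_defect_eq0 (F : nat -> R -> R) (c : nat -> R) (a : R) :
  (forall x, F 0%nat x = 0) ->
  (forall n x, is_derive (F (S n)) x (c n * F n x)) ->
  (forall n, c n <> 0) -> a <> 0 ->
  (forall n, F (S (S n)) a = F (S (S n)) 0) ->
  forall n x, F n x = 0.
Proof.
  intros H0 HD Hc Ha Hper n. induction n as [|n IHn]; intro x; auto.
  assert (Hconst : forall y, F (S n) y = F (S n) 0).
  { intro y. assert (E := is_derive_const_diff (F (S n)) 0 0 y).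
    enough (F (S n) y - F (S n) 0 = 0) by lra. rewrite E; [ring|].
    intro z. rewrite <- (Rmult_0_r (c n)), <- (IHn z). apply HD. }
  assert (E : F (S (S n)) a - F (S (S n)) 0 = c (S n) * F (S n) 0 * (a - 0)).
  { apply is_derive_const_diff. intro z. rewrite <- (Hconst z). apply HD. }
  rewrite Hper, Rminus_0_r, Rminus_diag in E. rewrite Hconst.
  destruct (Rmult_integral _ _ (eq_sym E)) as [E'|E']; [|contradiction].
  destruct (Rmult_integral _ _ E'); [exfalso; apply (Hc (S n))|]; auto.
Qed.

Lemma bernoulli_poly_reflect n x : bernoulli_poly n (1 - x) = (-1) ^ n * bernoulli_poly n x.
Proof.
  enough (bernoulli_poly n (1 - x) - (-1) ^ n * bernoulli_poly n x = 0) by lra.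
  apply (appell_defect_eq0
    (fun n x => bernoulli_poly n (1 - x) - (-1) ^ n * bernoulli_poly n x)
    (fun n => - INR (S n)) 1); clear n x.
  - intro x. rewrite !bernoulli_poly_0. simpl. ring.
  - intros n x. auto_derive; [repeat split; apply ex_derive_bernoulli_poly|].
    change (fun y => bernoulli_poly (S n) y) with (bernoulli_poly (S n)).
    rewrite !Derive_bernoulli_poly. simpl. unfold Rminus. ring.
  - intro n. apply Ropp_neq_0_compat, not_0_INR. lia.
  - lra.
  - intro n. rewrite Rminus_diag, Rminus_0_r, bernoulli_poly_at0,
      bernoulli_poly_at1 by lia. simpl. ring.
Qed.

Lemma sum_f_R0_shift (f : nat -> R) n :
  sum_f_R0 (fun k => f (S k)) n = sum_f_R0 f n + f (S n) - f 0%nat.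
Proof. rewrite <- tech5, (decomp_sum f (S n)) by lia. simpl. ring. Qed.

Lemma bernoulli_poly_mult r n x : (0 < r)%nat ->
  INR r * bernoulli_poly n (INR r * x) =
  INR r ^ n * sum_f_R0 (fun k => bernoulli_poly n (x + INR k / INR r)) (pred r).
Proof.
  intro Hr. assert (Hr0 : INR r <> 0) by (apply not_0_INR; lia).
  set (shifts m y := sum_f_R0 (fun k => bernoulli_poly m (y + INR k / INR r)) (pred r)).
  fold (shifts n x).
  enough (INR r * bernoulli_poly n (INR r * x) - INR r ^ n * shifts n x = 0) by lra.
  apply (appell_defect_eq0
    (fun n x => INR r * bernoulli_poly n (INR r * x) - INR r ^ n * shifts n x)
    (fun n => INR r * INR (S n)) (/ INR r)); clear n x.
  - intro x. unfold shifts. rewrite bernoulli_poly_0,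
      (sum_eq _ (fun _ => 1)) by (intros; apply bernoulli_poly_0).
    rewrite sum_cte, Nat.succ_pred_pos by lia. ring.
  - intros n x.
    assert (Hshifts : is_derive (shifts (S n)) x (INR (S n) * shifts n x)).
    { unfold shifts. rewrite scal_sum. apply is_derive_sum_f_R0. intros k _.
      auto_derive; [apply ex_derive_bernoulli_poly|].
      rewrite Derive_bernoulli_poly. ring. }
    auto_derive.
    + split; [apply ex_derive_bernoulli_poly|]. split; [|exact I].
      eexists. exact Hshifts.
    + change (fun y => bernoulli_poly (S n) y) with (bernoulli_poly (S n)).
      change (fun y => shifts (S n) y) with (shifts (S n)).
      rewrite Derive_bernoulli_poly, (is_derive_unique _ _ _ Hshifts). simpl. ring.
  - intro n. apply Rmult_integral_contrapositive. split; auto. apply not_0_INR. lia.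
  - apply Rinv_neq_0_compat, Hr0.
  - intro n. unfold shifts. rewrite Rinv_r, Rmult_0_r, bernoulli_poly_at0,
      bernoulli_poly_at1 by (auto || lia).
    destruct r as [|r']; [lia|]. simpl pred.
    set (f k := bernoulli_poly (S (S n)) (INR k / INR (S r'))).
    rewrite (sum_eq _ (fun k => f (S k)))
      by (intros i _; unfold f; f_equal; rewrite (S_INR i); field; auto).
    rewrite (sum_eq (fun k => bernoulli_poly (S (S n)) (0 + INR k / INR (S r'))) f)
      by (intros i _; unfold f; f_equal; ring).
    rewrite sum_f_R0_shift.
    unfold f. rewrite Rdiv_diag, bernoulli_poly_at1, <- bernoulli_poly_at0 by (auto || lia).
    simpl (INR 0). rewrite Rdiv_0_l. ring.
Qed.

Lemma bernoulli_poly_mult2 n x :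
  2 * bernoulli_poly n (2 * x) = 2 ^ n * (bernoulli_poly n x + bernoulli_poly n (x + / 2)).
Proof.
  assert (H := bernoulli_poly_mult 2 n x ltac:(lia)). simpl in H.
  replace (1 + 1) with 2 in H by ring. rewrite H.
  rewrite Rdiv_0_l, Rplus_0_r, Rdiv_1_l. reflexivity.
Qed.

Lemma bernoulli_poly_mult3 n x :
  3 * bernoulli_poly n (3 * x) = 3 ^ n * (bernoulli_poly n x +
    bernoulli_poly n (x + / 3) + bernoulli_poly n (x + 2 / 3)).
Proof.
  assert (H := bernoulli_poly_mult 3 n x ltac:(lia)). simpl in H.
  replace (1 + 1 + 1) with 3 in H by ring. rewrite H.
  rewrite Rdiv_0_l, Rplus_0_r, Rdiv_1_l. replace ((1 + 1) / 3) with (2 / 3) by field.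
  reflexivity.
Qed.

Lemma bernoulli_odd p : bernoulli (2 * p + 3) = 0.
Proof.
  rewrite <- bernoulli_poly_at0.
  assert (H := bernoulli_poly_reflect (2 * p + 3) 0).
  rewrite Rminus_0_r, bernoulli_poly_at1, <- bernoulli_poly_at0 in H by lia.
  rewrite pow_add, pow_mult in H. replace ((-1) ^ 2) with 1 in H by ring.
  rewrite pow1 in H. simpl ((-1) ^ 3) in H. lra.
Qed.

Lemma bernoulli_poly_even_reflect j x :
  bernoulli_poly (2 * j) (1 - x) = bernoulli_poly (2 * j) x.
Proof.
  rewrite bernoulli_poly_reflect, pow_mult.
  replace ((-1) ^ 2) with 1 by ring. rewrite pow1. ring.
Qed.

(** * Fourier coefficients of Bernoulli polynomials *)

Lemma continuous_of_ex_derive (f : R -> R) x : ex_derive f x -> continuous f x.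
Proof. exact (ex_derive_continuous (K := R_AbsRing) (V := R_NormedModule) f x). Qed.

Lemma is_RInt_eq (f g : R -> R) a b (l l' : R) :
  is_RInt f a b l -> (forall x, f x = g x) -> l = l' -> is_RInt g a b l'.
Proof. intros H E <-. apply (is_RInt_ext f); auto. Qed.

Lemma ex_RInt_continuous_R (f : R -> R) a b :
  (forall x, Rmin a b <= x <= Rmax a b -> continuous f x) -> ex_RInt f a b.
Proof. apply (ex_RInt_continuous (V := R_CompleteNormedModule)). Qed.

Lemma RInt_Chasles_R (f : R -> R) a b c : ex_RInt f a b -> ex_RInt f b c ->
  RInt f a b + RInt f b c = RInt f a c.
Proof. apply (RInt_Chasles (V := R_CompleteNormedModule)). Qed.

(* For [a] with [sin a = 0] and [cos a = 1], the pair
   (int_0^1 B_m(x) cos(a x) dx, int_0^1 B_m(x) sin(a x) dx),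
   computed by integrating by parts. *)
Fixpoint fourier_coeffs (a : R) (m : nat) : R * R :=
  match m with
  | O => (0, 0)
  | S m' => let (c, s) := fourier_coeffs a m' in
      (- (INR (S m') / a) * s,
       - (bernoulli_poly (S m') 1 - bernoulli_poly (S m') 0) / a + INR (S m') / a * c)
  end.

Lemma fourier_coeffs_S a m : fourier_coeffs a (S m) =
  let (c, s) := fourier_coeffs a m in
  (- (INR (S m) / a) * s,
   - (bernoulli_poly (S m) 1 - bernoulli_poly (S m) 0) / a + INR (S m) / a * c).
Proof. reflexivity. Qed.

Lemma is_RInt_parts (u u' v v' : R -> R) a b J :
  (forall x, Rmin a b <= x <= Rmax a b -> is_derive u x (u' x)) ->
  (forall x, Rmin a b <= x <= Rmax a b -> is_derive v x (v' x)) ->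
  (forall x, Rmin a b <= x <= Rmax a b -> continuous u' x) ->
  (forall x, Rmin a b <= x <= Rmax a b -> continuous v' x) ->
  is_RInt (fun x => u' x * v x) a b J ->
  is_RInt (fun x => u x * v' x) a b (u b * v b - u a * v a - J).
Proof.
  intros Hu Hv Hu' Hv' HJ.
  assert (Huv : is_RInt (fun x => u' x * v x + u x * v' x) a b (minus (u b * v b) (u a * v a))).
  { apply (is_RInt_derive (fun x => u x * v x)).
    - intros x Hx. apply (is_derive_mult u v); auto. intros; apply Rmult_comm.
    - intros x Hx. apply (continuous_plus (fun y => u' y * v y)).
      + apply (continuous_mult u'); auto.
        apply continuous_of_ex_derive. eexists. apply Hv, Hx.
      + apply (continuous_mult u); auto.
        apply continuous_of_ex_derive. eexists. apply Hu, Hx. }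
  eapply is_RInt_eq; [exact (is_RInt_minus _ _ _ _ _ _ Huv HJ)| |].
  - intro x. unfold minus, plus, opp. simpl. ring.
  - unfold minus, plus, opp. simpl. ring.
Qed.

Section FourierCoefficients.

Variable a : R.
Hypothesis a_neq0 : a <> 0.
Hypothesis sin_a : sin a = 0.
Hypothesis cos_a : cos a = 1.

Lemma is_RInt_mul_cos_parts (u u' : R -> R) J :
  (forall x, is_derive u x (u' x)) -> (forall x, continuous u' x) ->
  is_RInt (fun x => u' x * sin (a * x)) 0 1 J ->
  is_RInt (fun x => u x * cos (a * x)) 0 1 (- J / a).
Proof.
  intros Hu Hu' HI.
  eapply is_RInt_eq; [apply (is_RInt_parts u u' (fun x => sin (a * x) / a)
    (fun x => cos (a * x)) 0 1 (J / a))| |]; auto.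
  - intros x _. auto_derive; auto. field. exact a_neq0.
  - intros x _. apply continuous_of_ex_derive. auto_derive. exact I.
  - eapply is_RInt_eq; [exact (is_RInt_scal _ _ _ (/ a) _ HI)| |].
    + intro x. unfold scal. simpl. unfold mult. simpl. field. exact a_neq0.
    + unfold scal. simpl. unfold mult. simpl. field. exact a_neq0.
  - rewrite Rmult_1_r, Rmult_0_r, sin_a, sin_0. field. exact a_neq0.
Qed.

Lemma is_RInt_mul_sin_parts (u u' : R -> R) J :
  (forall x, is_derive u x (u' x)) -> (forall x, continuous u' x) ->
  is_RInt (fun x => u' x * cos (a * x)) 0 1 J ->
  is_RInt (fun x => u x * sin (a * x)) 0 1 (- (u 1 - u 0) / a + J / a).
Proof.
  intros Hu Hu' HJ.
  eapply is_RInt_eq; [apply (is_RInt_parts u u' (fun x => - cos (a * x) / a)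
    (fun x => sin (a * x)) 0 1 (- J / a))| |]; auto.
  - intros x _. auto_derive; auto. field. exact a_neq0.
  - intros x _. apply continuous_of_ex_derive. auto_derive. exact I.
  - eapply is_RInt_eq; [exact (is_RInt_scal _ _ _ (- / a) _ HJ)| |].
    + intro x. unfold scal. simpl. unfold mult. simpl. field. exact a_neq0.
    + unfold scal. simpl. unfold mult. simpl. field. exact a_neq0.
  - rewrite Rmult_1_r, Rmult_0_r, cos_a, cos_0. field. exact a_neq0.
Qed.

Lemma is_RInt_fourier_coeffs m :
  is_RInt (fun x => bernoulli_poly m x * cos (a * x)) 0 1 (fst (fourier_coeffs a m)) /\
  is_RInt (fun x => bernoulli_poly m x * sin (a * x)) 0 1 (snd (fourier_coeffs a m)).
Proof.
  assert (Hcont : forall m x, continuous (bernoulli_poly m) x)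
    by (intros; apply continuous_of_ex_derive, ex_derive_bernoulli_poly).
  induction m as [|m [IHc IHs]].
  - assert (Hconst : forall x, is_derive (bernoulli_poly 0) x 0).
    { intro x. apply (is_derive_ext (fun _ => 1)); [intro; symmetry; apply bernoulli_poly_0|].
      auto_derive; auto. }
    assert (Hzero : forall f, is_RInt (fun x => 0 * f x) 0 1 0).
    { intro f. eapply is_RInt_eq; [apply (is_RInt_const 0 1 0)| |].
      - intro x. simpl. ring.
      - unfold scal. simpl. unfold mult. simpl. ring. }
    split; eapply is_RInt_eq.
    + apply (is_RInt_mul_cos_parts (bernoulli_poly 0) (fun _ => 0));
        [exact Hconst | intro; apply continuous_const | apply Hzero].
    + reflexivity.
    + simpl. field. exact a_neq0.
    + apply (is_RInt_mul_sin_parts (bernoulli_poly 0) (fun _ => 0));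
        [exact Hconst | intro; apply continuous_const | apply Hzero].
    + reflexivity.
    + rewrite !bernoulli_poly_0. simpl. field. exact a_neq0.
  - rewrite fourier_coeffs_S. destruct (fourier_coeffs a m) as [c s].
    cbv beta iota zeta in *. cbn [fst snd] in *.
    assert (Hscal : forall f J, is_RInt (fun x => bernoulli_poly m x * f x) 0 1 J ->
        is_RInt (fun x => INR (S m) * bernoulli_poly m x * f x) 0 1 (INR (S m) * J)).
    { intros f J HJ. eapply is_RInt_eq; [exact (is_RInt_scal _ _ _ (INR (S m)) _ HJ)| |].
      - intro x. unfold scal. simpl. unfold mult. simpl. ring.
      - reflexivity. }
    split; eapply is_RInt_eq.
    + apply (is_RInt_mul_cos_parts (bernoulli_poly (S m))
        (fun x => INR (S m) * bernoulli_poly m x));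
        [apply is_derive_bernoulli_poly | | apply Hscal, IHs].
      intro x. apply (continuous_mult (fun _ => INR (S m))); auto using continuous_const.
    + reflexivity.
    + field. exact a_neq0.
    + apply (is_RInt_mul_sin_parts (bernoulli_poly (S m))
        (fun x => INR (S m) * bernoulli_poly m x));
        [apply is_derive_bernoulli_poly | | apply Hscal, IHc].
      intro x. apply (continuous_mult (fun _ => INR (S m))); auto using continuous_const.
    + reflexivity.
    + field. exact a_neq0.
Qed.

End FourierCoefficients.

Lemma fourier_coeffs_odd a : a <> 0 -> forall k,
  fourier_coeffs a (2 * k + 1) =
  (0, (-1) ^ (k + 1) * INR (fact (2 * k + 1)) / a ^ (2 * k + 1)).
Proof.
  intros Ha k. induction k as [|k IHk].
  - simpl. rewrite bernoulli_poly_at0. unfold bernoulli_poly, bernoulli, Binomial.C.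
    simpl. f_equal; field; auto.
  - replace (2 * S k + 1)%nat with (S (S (2 * k + 1))) by lia.
    rewrite !fourier_coeffs_S, IHk, !bernoulli_poly_at1, !bernoulli_poly_at0 by lia.
    f_equal; [field; auto|].
    replace (S k + 1)%nat with (S (k + 1)) by lia.
    rewrite !fact_simpl, !mult_INR, !S_INR, <- !tech_pow_Rmult.
    field. split; auto. apply pow_nonzero; auto.
Qed.

Lemma fourier_cos_coeff_even a : a <> 0 -> forall k,
  fst (fourier_coeffs a (2 * k + 2)) = (-1) ^ k * INR (fact (2 * k + 2)) / a ^ (2 * k + 2).
Proof.
  intros Ha k. replace (2 * k + 2)%nat with (S (2 * k + 1)) by lia.
  rewrite fourier_coeffs_S, fourier_coeffs_odd by auto. cbv beta iota zeta. unfold fst.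
  rewrite fact_simpl, mult_INR, <- tech_pow_Rmult, pow_add, pow_1.
  field. split; auto. apply pow_nonzero; auto.
Qed.

(** * Integration against the Dirichlet kernel *)

Definition fourier_freq (i : nat) : R := 2 * PI * INR (S i).

Definition dirichlet_sum (N : nat) (x : R) : R :=
  sum_f_R0 (fun i => cos (fourier_freq i * x)) N.

Lemma sin_fourier_freq i : sin (fourier_freq i) = 0.
Proof.
  unfold fourier_freq. replace (2 * PI * INR (S i)) with (0 + 2 * INR (S i) * PI) by ring.
  rewrite sin_period. apply sin_0.
Qed.

Lemma cos_fourier_freq i : cos (fourier_freq i) = 1.
Proof.
  unfold fourier_freq. replace (2 * PI * INR (S i)) with (0 + 2 * INR (S i) * PI) by ring.
  rewrite cos_period. apply cos_0.
Qed.

Lemma fourier_freq_neq0 i : fourier_freq i <> 0.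
Proof.
  unfold fourier_freq. assert (0 < INR (S i)) by (apply lt_0_INR; lia).
  assert (HP := PI_RGT_0). apply Rgt_not_eq. apply Rmult_lt_0_compat; lra.
Qed.

Lemma is_RInt_bernoulli_dirichlet m N :
  is_RInt (fun x => bernoulli_poly m x * dirichlet_sum N x) 0 1
    (sum_f_R0 (fun i => fst (fourier_coeffs (fourier_freq i) m)) N).
Proof.
  assert (Hcos : forall i, is_RInt (fun x => bernoulli_poly m x * cos (fourier_freq i * x)) 0 1
      (fst (fourier_coeffs (fourier_freq i) m))).
  { intro i. exact (proj1 (is_RInt_fourier_coeffs _ (fourier_freq_neq0 i)
      (sin_fourier_freq i) (cos_fourier_freq i) m)). }
  induction N as [|N IHN].
  - exact (Hcos 0%nat).
  - eapply is_RInt_eq; [exact (is_RInt_plus _ _ _ _ _ _ IHN (Hcos (S N)))| |].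
    + intro x. unfold dirichlet_sum, plus. simpl. ring.
    + reflexivity.
Qed.

Lemma is_RInt_bernoulli_poly_S n : is_RInt (bernoulli_poly (S n)) 0 1 0.
Proof.
  assert (Hn : INR (S (S n)) <> 0) by (apply not_0_INR; lia).
  remember (INR (S (S n))) as c eqn:Hc.
  eapply is_RInt_eq; [apply (is_RInt_derive
    (fun x => bernoulli_poly (S (S n)) x / c) (bernoulli_poly (S n)))| |].
  - intros x _. auto_derive; [apply ex_derive_bernoulli_poly|].
    rewrite Derive_bernoulli_poly, <- Hc. field. exact Hn.
  - intros x _. apply continuous_of_ex_derive, ex_derive_bernoulli_poly.
  - reflexivity.
  - unfold minus, plus, opp. simpl.
    rewrite bernoulli_poly_at1, bernoulli_poly_at0 by lia. ring.
Qed.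

Lemma two_sin_mul_cos a b : 2 * sin a * cos b = sin (b + a) - sin (b - a).
Proof. rewrite sin_plus, sin_minus. ring. Qed.

Lemma dirichlet_sum_closed N x :
  2 * sin (PI * x) * (dirichlet_sum N x + / 2) = sin ((2 * INR N + 3) * PI * x).
Proof.
  assert (Hstep : forall i, 2 * sin (PI * x) * cos (fourier_freq i * x) =
     sin ((2 * INR i + 3) * PI * x) - sin ((2 * INR i + 1) * PI * x)).
  { intro i. rewrite two_sin_mul_cos. unfold fourier_freq. rewrite S_INR.
    f_equal; f_equal; ring. }
  induction N as [|N IHN]; unfold dirichlet_sum in *.
  - simpl sum_f_R0.
    transitivity (2 * sin (PI * x) * cos (fourier_freq 0 * x) + sin (PI * x)); [field|].
    rewrite Hstep. simpl INR. replace ((2 * 0 + 1) * PI * x) with (PI * x) by ring. ring.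
  - rewrite tech5.
    transitivity (2 * sin (PI * x) * (sum_f_R0 (fun i => cos (fourier_freq i * x)) N + / 2)
      + 2 * sin (PI * x) * cos (fourier_freq (S N) * x)); [ring|].
    rewrite IHN, Hstep, S_INR.
    replace ((2 * (INR N + 1) + 1) * PI * x) with ((2 * INR N + 3) * PI * x) by ring. ring.
Qed.

Definition bernoulli_poly_bound (m : nat) : R :=
  sum_f_R0 (fun k => Rabs (Binomial.C m k * bernoulli k)) m.

Lemma Rabs_bernoulli_poly_le m x : 0 <= x <= 1 ->
  Rabs (bernoulli_poly m x) <= bernoulli_poly_bound m.
Proof.
  intro Hx. unfold bernoulli_poly, bernoulli_poly_bound.
  eapply Rle_trans; [apply Rsum_abs|]. apply sum_Rle. intros k _.
  rewrite Rabs_mult, (Rabs_right (x ^ (m - k))) by (apply Rle_ge, pow_le; lra).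
  rewrite <- (Rmult_1_r (Rabs (Binomial.C m k * bernoulli k))) at 2.
  apply Rmult_le_compat_l; [apply Rabs_pos|].
  rewrite <- (pow1 (m - k)). apply pow_incr. lra.
Qed.

Lemma bernoulli_poly_bound_ge0 m : 0 <= bernoulli_poly_bound m.
Proof. apply cond_pos_sum. intro k. apply Rabs_pos. Qed.

Definition bernoulli_incr (n : nat) (x : R) : R :=
  bernoulli_poly (S n) x - bernoulli (S n).

Lemma is_derive_bernoulli_incr n x :
  is_derive (bernoulli_incr n) x (INR (S n) * bernoulli_poly n x).
Proof.
  unfold bernoulli_incr. auto_derive; [apply ex_derive_bernoulli_poly|].
  change (fun y => bernoulli_poly (S n) y) with (bernoulli_poly (S n)).
  rewrite Derive_bernoulli_poly. ring.
Qed.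

Lemma ex_derive_bernoulli_incr n x : ex_derive (bernoulli_incr n) x.
Proof. eexists. apply is_derive_bernoulli_incr. Qed.

Lemma bernoulli_incr_at0 n : bernoulli_incr n 0 = 0.
Proof. unfold bernoulli_incr. rewrite bernoulli_poly_at0. ring. Qed.

Lemma bernoulli_incr_at1 n : (1 <= n)%nat -> bernoulli_incr n 1 = 0.
Proof. intro Hn. unfold bernoulli_incr. rewrite bernoulli_poly_at1 by lia. ring. Qed.

Lemma Rabs_bernoulli_incr_sub_le n u v : 0 <= u <= v -> v <= 1 ->
  Rabs (bernoulli_incr n v - bernoulli_incr n u) <= INR (S n) * bernoulli_poly_bound n * (v - u).
Proof.
  intros Hu Hv.
  destruct (MVT_gen (bernoulli_incr n) u v (fun x => INR (S n) * bernoulli_poly n x))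
    as [c [Hc ->]].
  - intros x _. apply is_derive_bernoulli_incr.
  - intros x _. apply derivable_continuous_pt. eexists.
    apply is_derive_Reals, is_derive_bernoulli_incr.
  - rewrite Rmin_left, Rmax_right in Hc by lra.
    rewrite !Rabs_mult, (Rabs_right (v - u)), Rabs_right by (apply Rle_ge; (apply pos_INR || lra)).
    apply Rmult_le_compat_r; [lra|]. apply Rmult_le_compat_l; [apply pos_INR|].
    apply Rabs_bernoulli_poly_le. lra.
Qed.

Lemma sin_ge_third y : 0 <= y <= 2 -> y / 3 <= sin y.
Proof.
  intro Hy. assert (HP := PI2_3_2).
  destruct (SIN y) as [Hlb _]; try lra.
  replace (sin_lb y) with (y - y ^ 3 / 6 + y ^ 5 / 120 - y ^ 7 / 5040) in Hlb
    by (unfold sin_lb, sin_approx, sin_term; simpl; field).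
  assert (0 <= y ^ 5 * (42 - y ^ 2)) by (apply Rmult_le_pos; [apply pow_le|]; nra).
  assert (y ^ 3 <= 4 * y) by nra.
  nra.
Qed.

Lemma sin_PI_mul_ge_dist x : 0 <= x <= 1 -> Rmin x (1 - x) <= sin (PI * x).
Proof.
  intro Hx. assert (HP := PI2_3_2). assert (HP4 := PI_4).
  destruct (Rle_lt_dec x (/ 2)) as [Hle|Hlt].
  - rewrite Rmin_left by lra.
    assert (PI * x / 3 <= sin (PI * x)) by (apply sin_ge_third; split; nra). nra.
  - rewrite Rmin_right by lra.
    replace (PI * x) with (PI - PI * (1 - x)) by ring. rewrite sin_PI_x.
    assert (PI * (1 - x) / 3 <= sin (PI * (1 - x))) by (apply sin_ge_third; split; nra).
    nra.
Qed.

Lemma Rabs_bernoulli_incr_le_dist n x : (1 <= n)%nat -> 0 <= x <= 1 ->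
  Rabs (bernoulli_incr n x) <= INR (S n) * bernoulli_poly_bound n * Rmin x (1 - x).
Proof.
  intros Hn Hx. apply Rmin_case.
  - replace (bernoulli_incr n x) with (bernoulli_incr n x - bernoulli_incr n 0)
      by (rewrite bernoulli_incr_at0; ring).
    replace x with (x - 0) at 2 by ring.
    apply Rabs_bernoulli_incr_sub_le; lra.
  - replace (bernoulli_incr n x) with (- (bernoulli_incr n 1 - bernoulli_incr n x))
      by (rewrite bernoulli_incr_at1 by exact Hn; ring).
    rewrite Rabs_Ropp. apply Rabs_bernoulli_incr_sub_le; lra.
Qed.

Definition dirichlet_integrand (n N : nat) (x : R) : R :=
  bernoulli_incr n x * (dirichlet_sum N x + / 2).

Lemma dirichlet_integrand_eq n N x : sin (PI * x) <> 0 ->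
  dirichlet_integrand n N x =
  bernoulli_incr n x / (2 * sin (PI * x)) * sin ((2 * INR N + 3) * PI * x).
Proof.
  intro Hs. unfold dirichlet_integrand. rewrite <- dirichlet_sum_closed. field. exact Hs.
Qed.

Lemma Rabs_dirichlet_integrand_le n N x : (1 <= n)%nat -> 0 <= x <= 1 ->
  Rabs (dirichlet_integrand n N x) <= INR (S n) * bernoulli_poly_bound n.
Proof.
  intros Hn Hx.
  assert (HL : 0 <= INR (S n) * bernoulli_poly_bound n)
    by (apply Rmult_le_pos; [apply pos_INR | apply bernoulli_poly_bound_ge0]).
  destruct (Req_dec x 0) as [->|Hx0].
  { unfold dirichlet_integrand. rewrite bernoulli_incr_at0, Rmult_0_l, Rabs_R0. exact HL. }
  destruct (Req_dec x 1) as [->|Hx1].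
  { unfold dirichlet_integrand. rewrite bernoulli_incr_at1, Rmult_0_l, Rabs_R0 by exact Hn.
    exact HL. }
  set (t := Rmin x (1 - x)).
  assert (Ht : 0 < t) by (apply Rmin_glb_lt; lra).
  assert (Hsin := sin_PI_mul_ge_dist x Hx). fold t in Hsin.
  assert (Hincr := Rabs_bernoulli_incr_le_dist n x Hn Hx). fold t in Hincr.
  rewrite dirichlet_integrand_eq by lra.
  unfold Rdiv. rewrite !Rabs_mult, Rabs_inv, (Rabs_right (2 * sin (PI * x))) by lra.
  assert (Rabs (sin ((2 * INR N + 3) * PI * x)) <= 1) by apply Rabs_le, SIN_bound.
  assert (/ (2 * sin (PI * x)) <= / (2 * t)) by (apply Rinv_le_contravar; lra).
  apply Rle_trans with (INR (S n) * bernoulli_poly_bound n * t * / (2 * t) * 1).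
  - apply Rmult_le_compat; try apply Rabs_pos.
    + apply Rmult_le_pos; [apply Rabs_pos|]. apply Rlt_le, Rinv_0_lt_compat. lra.
    + apply Rmult_le_compat; auto. apply Rabs_pos. apply Rlt_le, Rinv_0_lt_compat. lra.
    + assumption.
  - replace (INR (S n) * bernoulli_poly_bound n * t * / (2 * t) * 1)
      with (INR (S n) * bernoulli_poly_bound n / 2) by (field; lra). lra.
Qed.

Lemma RInt_mul_sin_parts (g g' : R -> R) a b M : a <= b -> M <> 0 ->
  (forall x, a <= x <= b -> is_derive g x (g' x)) ->
  (forall x, a <= x <= b -> continuous g' x) ->
  RInt (fun x => g x * sin (M * x)) a b =
  (- g b * cos (M * b) + g a * cos (M * a) + RInt (fun x => g' x * cos (M * x)) a b) / M.
Proof.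
  intros Hab HM Hg Hg'.
  assert (Hin : forall x, Rmin a b <= x <= Rmax a b -> a <= x <= b)
    by (intro x; rewrite Rmin_left, Rmax_right by lra; auto).
  assert (Hex : ex_RInt (fun x => g' x * cos (M * x)) a b).
  { apply ex_RInt_continuous_R. intros x Hx. apply (continuous_mult g'); [auto|].
    apply continuous_of_ex_derive. auto_derive. exact I. }
  apply is_RInt_unique. eapply is_RInt_eq; [apply (is_RInt_parts g g'
    (fun x => - cos (M * x) / M) (fun x => sin (M * x)) a b
    (- / M * RInt (fun x => g' x * cos (M * x)) a b))| |]; auto.
  - intros x _. auto_derive; auto. field. exact HM.
  - intros x _. apply continuous_of_ex_derive. auto_derive. exact I.
  - eapply is_RInt_eq; [exact (is_RInt_scal _ _ _ (- / M) _ (RInt_correct _ _ _ Hex))| |].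
    + intro x. unfold scal. simpl. unfold mult. simpl. field. exact HM.
    + reflexivity.
  - field. exact HM.
Qed.

Lemma Rabs_RInt_mul_sin_le (g g' : R -> R) a b M : a <= b -> 0 < M ->
  (forall x, a <= x <= b -> is_derive g x (g' x)) ->
  (forall x, a <= x <= b -> continuous g' x) ->
  Rabs (RInt (fun x => g x * sin (M * x)) a b) <=
  (Rabs (g a) + Rabs (g b) + RInt (fun x => Rabs (g' x)) a b) / M.
Proof.
  intros Hab HM Hg Hg'.
  assert (Hin : forall x, Rmin a b <= x <= Rmax a b -> a <= x <= b)
    by (intro x; rewrite Rmin_left, Rmax_right by lra; auto).
  assert (Hgcos : forall x, a <= x <= b -> continuous (fun y => g' y * cos (M * y)) x).
  { intros x Hx. apply (continuous_mult g'); [auto|].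
    apply continuous_of_ex_derive. auto_derive. exact I. }
  rewrite (RInt_mul_sin_parts g g') by (auto; lra).
  unfold Rdiv. rewrite Rabs_mult, (Rabs_right (/ M))
    by (apply Rle_ge, Rlt_le, Rinv_0_lt_compat, HM).
  apply Rmult_le_compat_r; [apply Rlt_le, Rinv_0_lt_compat, HM|].
  assert (HI : Rabs (RInt (fun y => g' y * cos (M * y)) a b)
      <= RInt (fun x => Rabs (g' x)) a b).
  { eapply Rle_trans; [apply abs_RInt_le; [exact Hab|]|].
    - apply ex_RInt_continuous_R. intros x Hx. apply Hgcos, Hin, Hx.
    - apply RInt_le; [exact Hab | | |].
      + apply ex_RInt_continuous_R. intros x Hx. apply continuous_Rabs_comp, Hgcos, Hin, Hx.
      + apply ex_RInt_continuous_R. intros x Hx. apply continuous_Rabs_comp, Hg', Hin, Hx.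
      + intros x _. rewrite Rabs_mult.
        assert (Rabs (cos (M * x)) <= 1) by apply Rabs_le, COS_bound.
        assert (0 <= Rabs (g' x)) by apply Rabs_pos. nra. }
  assert (Rabs (cos (M * a)) <= 1) by apply Rabs_le, COS_bound.
  assert (Rabs (cos (M * b)) <= 1) by apply Rabs_le, COS_bound.
  eapply Rle_trans; [apply Rabs_triang|].
  eapply Rle_trans; [apply Rplus_le_compat_r, Rabs_triang|].
  rewrite !Rabs_mult, Rabs_Ropp.
  assert (0 <= Rabs (g a)) by apply Rabs_pos. assert (0 <= Rabs (g b)) by apply Rabs_pos.
  nra.
Qed.

Definition bernoulli_incr_over_sin (n : nat) (x : R) : R :=
  bernoulli_incr n x / (2 * sin (PI * x)).

Definition bernoulli_incr_over_sin' (n : nat) (x : R) : R :=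
  (INR (S n) * bernoulli_poly n x * (2 * sin (PI * x))
   - bernoulli_incr n x * (2 * (PI * cos (PI * x)))) / (2 * sin (PI * x)) ^ 2.

Lemma is_derive_bernoulli_incr_over_sin n x : sin (PI * x) <> 0 ->
  is_derive (bernoulli_incr_over_sin n) x (bernoulli_incr_over_sin' n x).
Proof.
  intro Hs. unfold bernoulli_incr_over_sin, bernoulli_incr_over_sin'. auto_derive.
  - repeat split; [apply ex_derive_bernoulli_incr|]. lra.
  - replace (Derive (fun y => bernoulli_incr n y) x) with (INR (S n) * bernoulli_poly n x)
      by (symmetry; apply is_derive_unique, is_derive_bernoulli_incr).
    field. exact Hs.
Qed.

Lemma continuous_bernoulli_incr_over_sin' n x : sin (PI * x) <> 0 ->
  continuous (bernoulli_incr_over_sin' n) x.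
Proof.
  intro Hs. apply continuous_of_ex_derive. unfold bernoulli_incr_over_sin'. auto_derive.
  split; [apply ex_derive_bernoulli_poly|]. split; [apply ex_derive_bernoulli_incr|].
  split; [|exact I]. rewrite Rmult_1_r. apply Rmult_integral_contrapositive. split; lra.
Qed.

Lemma sin_PI_mul_gt0 x : 0 < x < 1 -> 0 < sin (PI * x).
Proof. intro Hx. assert (HP := PI_RGT_0). apply sin_gt_0; nra. Qed.

Definition dirichlet_middle_bound (n : nat) (d : R) : R :=
  Rabs (bernoulli_incr_over_sin n d) + Rabs (bernoulli_incr_over_sin n (1 - d))
  + RInt (fun x => Rabs (bernoulli_incr_over_sin' n x)) d (1 - d).

Lemma Rabs_RInt_dirichlet_integrand_middle n N d : 0 < d <= / 4 ->
  Rabs (RInt (dirichlet_integrand n N) d (1 - d)) <=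
  dirichlet_middle_bound n d / ((2 * INR N + 3) * PI).
Proof.
  intro Hd. assert (HP := PI_RGT_0). assert (HN := pos_INR N).
  assert (Hsin : forall x, d <= x <= 1 - d -> sin (PI * x) <> 0)
    by (intros x Hx; apply Rgt_not_eq, sin_PI_mul_gt0; lra).
  rewrite (RInt_ext _ (fun x => bernoulli_incr_over_sin n x * sin ((2 * INR N + 3) * PI * x))).
  - apply Rabs_RInt_mul_sin_le; try lra; try nra.
    + intros x Hx. apply is_derive_bernoulli_incr_over_sin, Hsin, Hx.
    + intros x Hx. apply continuous_bernoulli_incr_over_sin', Hsin, Hx.
  - intros x Hx. rewrite Rmin_left, Rmax_right in Hx by lra.
    apply dirichlet_integrand_eq, Hsin. lra.
Qed.

Lemma ex_derive_dirichlet_sum N x : ex_derive (dirichlet_sum N) x.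
Proof.
  induction N as [|N IHN].
  - unfold dirichlet_sum. simpl sum_f_R0. auto_derive. exact I.
  - apply (ex_derive_ext (fun y => dirichlet_sum N y + cos (fourier_freq (S N) * y))).
    + intro y. reflexivity.
    + auto_derive. exact IHN.
Qed.

Lemma ex_RInt_dirichlet_integrand n N a b : ex_RInt (dirichlet_integrand n N) a b.
Proof.
  apply ex_RInt_continuous_R. intros x _. apply continuous_of_ex_derive.
  unfold dirichlet_integrand. auto_derive.
  repeat split; [apply ex_derive_bernoulli_incr | apply ex_derive_dirichlet_sum].
Qed.

Lemma Rabs_RInt_dirichlet_integrand_le n N d : (1 <= n)%nat -> 0 < d <= / 4 ->
  Rabs (RInt (dirichlet_integrand n N) 0 1) <=
  2 * d * (INR (S n) * bernoulli_poly_bound n)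
  + dirichlet_middle_bound n d / ((2 * INR N + 3) * PI).
Proof.
  intros Hn Hd.
  rewrite <- (RInt_Chasles_R _ 0 d 1), <- (RInt_Chasles_R _ d (1 - d) 1)
    by apply ex_RInt_dirichlet_integrand.
  assert (Hleft : Rabs (RInt (dirichlet_integrand n N) 0 d)
      <= (d - 0) * (INR (S n) * bernoulli_poly_bound n)).
  { apply abs_RInt_le_const; [lra | apply ex_RInt_dirichlet_integrand|].
    intros x Hx. apply Rabs_dirichlet_integrand_le; auto; lra. }
  assert (Hright : Rabs (RInt (dirichlet_integrand n N) (1 - d) 1)
      <= (1 - (1 - d)) * (INR (S n) * bernoulli_poly_bound n)).
  { apply abs_RInt_le_const; [lra | apply ex_RInt_dirichlet_integrand|].
    intros x Hx. apply Rabs_dirichlet_integrand_le; auto; lra. }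
  assert (Hmid := Rabs_RInt_dirichlet_integrand_middle n N d Hd).
  pose proof (Rabs_triang (RInt (dirichlet_integrand n N) 0 d)
    (RInt (dirichlet_integrand n N) d (1 - d) + RInt (dirichlet_integrand n N) (1 - d) 1)).
  pose proof (Rabs_triang (RInt (dirichlet_integrand n N) d (1 - d))
    (RInt (dirichlet_integrand n N) (1 - d) 1)).
  lra.
Qed.

Lemma RInt_dirichlet_integrand_vanishes n : (1 <= n)%nat -> forall eps, 0 < eps ->
  exists N0, forall N, (N0 <= N)%nat -> Rabs (RInt (dirichlet_integrand n N) 0 1) < eps.
Proof.
  intros Hn eps Heps. assert (HP := PI2_3_2).
  set (L := INR (S n) * bernoulli_poly_bound n).
  assert (HL : 0 <= L) by (apply Rmult_le_pos; [apply pos_INR | apply bernoulli_poly_bound_ge0]).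
  set (d := Rmin (/ 4) (eps / (4 * (L + 1)))).
  assert (Hd : 0 < d <= / 4).
  { split; [|apply Rmin_l]. apply Rmin_glb_lt; [lra|]. apply Rdiv_lt_0_compat; lra. }
  assert (HdL : 2 * d * L <= eps / 2).
  { assert (d <= eps / (4 * (L + 1))) by apply Rmin_r.
    apply Rle_trans with (2 * (eps / (4 * (L + 1))) * (L + 1)); [nra|].
    right. field. lra. }
  destruct (INR_unbounded (2 * dirichlet_middle_bound n d / eps)) as [N0 HN0].
  exists N0. intros N HN.
  assert (HNN : INR N0 <= INR N) by (apply le_INR; exact HN).
  assert (Hmid : dirichlet_middle_bound n d / ((2 * INR N + 3) * PI) < eps / 2).
  { assert (HN' := pos_INR N).
    assert (HX : INR N < (2 * INR N + 3) * PI) by nra.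
    assert (HC : dirichlet_middle_bound n d < eps / 2 * INR N).
    { replace (dirichlet_middle_bound n d)
        with (2 * dirichlet_middle_bound n d / eps * (eps / 2)) by (field; lra).
      rewrite Rmult_comm. apply Rmult_lt_compat_l; lra. }
    unfold Rdiv at 1. apply Rmult_lt_reg_r with ((2 * INR N + 3) * PI); [nra|].
    rewrite Rmult_assoc, Rinv_l, Rmult_1_r by nra. nra. }
  assert (Hle := Rabs_RInt_dirichlet_integrand_le n N d Hn Hd). fold L in Hle. lra.
Qed.

(** * Euler's formula *)

Lemma is_RInt_dirichlet_integrand n N : is_RInt (dirichlet_integrand n N) 0 1
  (sum_f_R0 (fun i => fst (fourier_coeffs (fourier_freq i) (S n))) N - bernoulli (S n) / 2).
Proof.
  assert (H1 := is_RInt_bernoulli_dirichlet (S n) N).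
  assert (H2 := is_RInt_bernoulli_poly_S n).
  assert (H3 := is_RInt_bernoulli_dirichlet 0 N).
  assert (H4 := is_RInt_const 0 1 (bernoulli (S n) / 2)).
  eapply is_RInt_eq; [exact (is_RInt_minus _ _ _ _ _ _
     (is_RInt_minus _ _ _ _ _ _ (is_RInt_plus _ _ _ _ _ _ H1 (is_RInt_scal _ _ _ (/ 2) _ H2))
        (is_RInt_scal _ _ _ (bernoulli (S n)) _ H3)) H4)| |].
  - intro x. unfold minus, plus, opp, scal. simpl. unfold mult. simpl.
    rewrite bernoulli_poly_0. unfold dirichlet_integrand, bernoulli_incr. field.
  - unfold minus, plus, opp, scal. simpl. unfold mult. simpl.
    rewrite (sum_eq_R0 (fun i => fst (fourier_coeffs (fourier_freq i) 0)))
      by (intros; reflexivity).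
    ring.
Qed.

Lemma pow_neg1_sqr k : (-1) ^ k * (-1) ^ k = 1.
Proof. rewrite <- Rpow_mult_distr. replace (-1 * -1) with 1 by ring. apply pow1. Qed.

Lemma sum_fourier_cos_coeffs k N :
  sum_f_R0 (fun i => fst (fourier_coeffs (fourier_freq i) (2 * k + 2))) N =
  (-1) ^ k * INR (fact (2 * k + 2)) / (2 * PI) ^ (2 * k + 2) *
  sum_f_R0 (fun i => / INR (S i) ^ (2 * k + 2)) N.
Proof.
  rewrite scal_sum. apply sum_eq. intros i _.
  rewrite fourier_cos_coeff_even by apply fourier_freq_neq0.
  unfold fourier_freq. rewrite !Rpow_mult_distr.
  assert (HP := PI_RGT_0). assert (0 < INR (S i)) by (apply lt_0_INR; lia).
  field. repeat split; apply pow_nonzero; lra.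
Qed.

Lemma infinite_sum_inv_pow_even k :
  infinite_sum (fun i => / INR (S i) ^ (2 * k + 2))
    ((-1) ^ k * bernoulli (2 * k + 2) * (2 * PI) ^ (2 * k + 2) / (2 * INR (fact (2 * k + 2)))).
Proof.
  set (c := (-1) ^ k * INR (fact (2 * k + 2)) / (2 * PI) ^ (2 * k + 2)).
  assert (HP := PI_RGT_0). assert (Hsgn := pow_neg1_sqr k).
  assert (Hc : c <> 0).
  { unfold c. apply Rmult_integral_contrapositive. split.
    - apply Rmult_integral_contrapositive. split; [|apply INR_fact_neq_0].
      intro E. rewrite E in Hsgn. lra.
    - apply Rinv_neq_0_compat, pow_nonzero. lra. }
  assert (Hca : 0 < Rabs c) by (apply Rabs_pos_lt; exact Hc).
  replace ((-1) ^ k * bernoulli (2 * k + 2) * (2 * PI) ^ (2 * k + 2)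
      / (2 * INR (fact (2 * k + 2)))) with (bernoulli (2 * k + 2) / 2 / c).
  2:{ transitivity ((-1) ^ k * (-1) ^ k * (bernoulli (2 * k + 2) / 2 / c)).
      - rewrite Hsgn. ring.
      - unfold c. field. split; [apply INR_fact_neq_0|]. split; [apply pow_nonzero; lra|].
        intro E. rewrite E in Hsgn. lra. }
  intros eps Heps.
  destruct (RInt_dirichlet_integrand_vanishes (2 * k + 1) ltac:(lia) (eps * Rabs c) ltac:(nra))
    as [N0 HN0].
  exists N0. intros N HN. unfold R_dist.
  assert (E := is_RInt_unique _ _ _ _ (is_RInt_dirichlet_integrand (2 * k + 1) N)).
  replace (S (2 * k + 1)) with (2 * k + 2)%nat in E by lia.
  rewrite sum_fourier_cos_coeffs in E. fold c in E.
  specialize (HN0 N HN). rewrite E in HN0.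
  set (s := sum_f_R0 (fun i => / INR (S i) ^ (2 * k + 2)) N) in *.
  replace (s - bernoulli (2 * k + 2) / 2 / c)
    with ((c * s - bernoulli (2 * k + 2) / 2) / c) by (field; exact Hc).
  unfold Rdiv at 1. rewrite Rabs_mult, Rabs_inv.
  apply (Rmult_lt_reg_r (Rabs c)); [exact Hca|].
  rewrite Rmult_assoc, Rinv_l, Rmult_1_r by lra. exact HN0.
Qed.

Lemma zeta_even_euler m : zeta_even m =
  (-1) ^ (m + 1) * bernoulli (2 * m) * (2 * PI) ^ (2 * m) / (2 * INR (fact (2 * m))).
Proof.
  destruct m as [|k].
  - simpl. unfold bernoulli. simpl. field.
  - unfold zeta_even, zeta_series.
    assert (Hs := infinite_sum_inv_pow_even k).
    replace (2 * S k)%nat with (2 * k + 2)%nat by lia.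
    rewrite (uniqueness_sum _ _ _ (epsilon_spec _ _ (ex_intro _ _ Hs)) Hs).
    replace ((-1) ^ (S k + 1)) with ((-1) ^ k) by (rewrite pow_add; simpl; ring).
    reflexivity.
Qed.

Lemma sum_f_R0_even_odd (f : nat -> R) j :
  sum_f_R0 f (2 * j + 2) =
  sum_f_R0 (fun m => f (2 * m)%nat) (S j) + sum_f_R0 (fun m => f (2 * m + 1)%nat) j.
Proof.
  induction j as [|j IHj].
  - simpl. ring.
  - replace (2 * S j + 2)%nat with (S (S (2 * j + 2))) by lia.
    rewrite !tech5, IHj, (tech5 (fun m => f (2 * m)%nat) j).
    replace (S (S (2 * j + 2))) with (2 * S (S j))%nat by lia.
    replace (S (2 * j + 2)) with (2 * S j + 1)%nat by lia. ring.
Qed.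

Lemma sum_f_R0_head (g : nat -> R) j :
  (forall m, (1 <= m)%nat -> g m = 0) -> sum_f_R0 g j = g 0%nat.
Proof. intro Hg. induction j as [|j IHj]; simpl; auto. rewrite IHj, (Hg (S j)) by lia. ring. Qed.

(* Only B_1 survives among the odd-index terms of B_(2j)(x). *)
Lemma sum_binomial_bernoulli_even j x : (1 <= j)%nat ->
  sum_f_R0 (fun m => Binomial.C (2 * j) (2 * m) * bernoulli (2 * m) * x ^ (2 * j - 2 * m)) j =
  bernoulli_poly (2 * j) x + INR j * x ^ (2 * j - 1).
Proof.
  intro Hj. destruct j as [|j]; [lia|].
  unfold bernoulli_poly. replace (2 * S j)%nat with (2 * j + 2)%nat by lia.
  rewrite sum_f_R0_even_odd, (sum_f_R0_head (fun m => Binomial.C (2 * j + 2) (2 * m + 1)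
      * bernoulli (2 * m + 1) * x ^ (2 * j + 2 - (2 * m + 1)))).
  2:{ intros m Hm. replace (2 * m + 1)%nat with (2 * (m - 1) + 3)%nat by lia.
      rewrite bernoulli_odd. ring. }
  replace (2 * 0 + 1)%nat with 1%nat by lia. rewrite bernoulli_1.
  replace (2 * j + 2)%nat with (S (2 * j + 1)) at 1 by lia. rewrite binomial_1.
  replace (2 * j + 2 - 1)%nat with (2 * S j - 1)%nat by lia.
  replace (2 * j + 2)%nat with (2 * S j)%nat by lia.
  rewrite !S_INR, !plus_INR, !mult_INR. simpl (INR 2). simpl (INR 1). field.
Qed.

Lemma bernoulli_poly_half j :
  bernoulli_poly (2 * j) (/ 2) = (2 / 2 ^ (2 * j) - 1) * bernoulli (2 * j).
Proof.
  assert (H := bernoulli_poly_mult2 (2 * j) 0).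
  rewrite Rmult_0_r, Rplus_0_l, bernoulli_poly_at0 in H.
  assert (0 < 2 ^ (2 * j)) by (apply pow_lt; lra).
  apply (Rmult_eq_reg_l (2 ^ (2 * j))); [|lra]. field_simplify; lra.
Qed.

Lemma bernoulli_poly_third j :
  bernoulli_poly (2 * j) (/ 3) = (3 / 3 ^ (2 * j) - 1) * bernoulli (2 * j) / 2.
Proof.
  assert (H := bernoulli_poly_mult3 (2 * j) 0).
  rewrite Rmult_0_r, !Rplus_0_l, bernoulli_poly_at0 in H.
  replace (2 / 3) with (1 - / 3) in H by field. rewrite bernoulli_poly_even_reflect in H.
  assert (0 < 3 ^ (2 * j)) by (apply pow_lt; lra).
  apply (Rmult_eq_reg_l (3 ^ (2 * j))); [|lra]. field_simplify; lra.
Qed.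

Lemma bernoulli_poly_quarter j :
  bernoulli_poly (2 * j) (/ 4) = bernoulli_poly (2 * j) (/ 2) / 2 ^ (2 * j).
Proof.
  assert (H := bernoulli_poly_mult2 (2 * j) (/ 4)).
  replace (2 * / 4) with (/ 2) in H by field. replace (/ 4 + / 2) with (1 - / 4) in H by field.
  rewrite bernoulli_poly_even_reflect in H.
  assert (0 < 2 ^ (2 * j)) by (apply pow_lt; lra).
  apply (Rmult_eq_reg_l (2 ^ (2 * j))); [|lra]. field_simplify; lra.
Qed.

Lemma bernoulli_poly_sixth j :
  bernoulli_poly (2 * j) (/ 6) = (2 / 2 ^ (2 * j) - 1) * bernoulli_poly (2 * j) (/ 3).
Proof.
  assert (H := bernoulli_poly_mult2 (2 * j) (/ 3)).
  replace (2 * / 3) with (1 - / 3) in H by field. replace (/ 3 + / 2) with (1 - / 6) in H by field.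
  rewrite !bernoulli_poly_even_reflect in H.
  assert (0 < 2 ^ (2 * j)) by (apply pow_lt; lra).
  apply (Rmult_eq_reg_l (2 ^ (2 * j))); [|lra]. field_simplify; lra.
Qed.

Lemma bernoulli_poly_twelfths j :
  bernoulli_poly (2 * j) (/ 12) + bernoulli_poly (2 * j) (7 / 12) =
  2 * bernoulli_poly (2 * j) (/ 6) / 2 ^ (2 * j).
Proof.
  assert (H := bernoulli_poly_mult2 (2 * j) (/ 12)).
  replace (2 * / 12) with (/ 6) in H by field. replace (/ 12 + / 2) with (7 / 12) in H by field.
  assert (0 < 2 ^ (2 * j)) by (apply pow_lt; lra).
  apply (Rmult_eq_reg_l (2 ^ (2 * j))); [|lra]. field_simplify; lra.
Qed.

Lemma bernoulli_poly_eighths j :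
  bernoulli_poly (2 * j) (/ 8) + bernoulli_poly (2 * j) (5 / 8) =
  2 * bernoulli_poly (2 * j) (/ 4) / 2 ^ (2 * j).
Proof.
  assert (H := bernoulli_poly_mult2 (2 * j) (/ 8)).
  replace (2 * / 8) with (/ 4) in H by field. replace (/ 8 + / 2) with (5 / 8) in H by field.
  assert (0 < 2 ^ (2 * j)) by (apply pow_lt; lra).
  apply (Rmult_eq_reg_l (2 ^ (2 * j))); [|lra]. field_simplify; lra.
Qed.

Lemma zpow_double_sub1 a m : a <> 0 -> zpow a (2 * Z.of_nat m - 1) = a ^ (2 * m) / a.
Proof.
  intro Ha. unfold zpow.
  replace (2 * Z.of_nat m - 1)%Z with (Z.of_nat (2 * m) + (-1))%Z by lia.
  rewrite powerRZ_add, <- pow_powerRZ by exact Ha. simpl. field. exact Ha.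
Qed.

Lemma zpow_1_sub_double a j : a <> 0 -> zpow a (1 - 2 * Z.of_nat j) = a / a ^ (2 * j).
Proof.
  intro Ha. unfold zpow.
  replace (1 - 2 * Z.of_nat j)%Z with (1 + - Z.of_nat (2 * j))%Z by lia.
  rewrite powerRZ_add, powerRZ_neg', <- pow_powerRZ by exact Ha. simpl. field.
  apply pow_nonzero, Ha.
Qed.

Ltac neq0 := repeat split; try apply INR_fact_neq_0; try (apply pow_nonzero; lra); try lra.

Lemma zeta_even_term j m q : 0 < q ->
  (-1) ^ (m + 1) / (INR (fact (2 * j - 2 * m)) * zpow 2 (2 * Z.of_nat m - 1)
     * q ^ (2 * j - 2 * m) * PI ^ (2 * m)) * zeta_even m
  = Binomial.C (2 * j) (2 * m) * bernoulli (2 * m) * (/ q) ^ (2 * j - 2 * m)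
    / INR (fact (2 * j)).
Proof.
  intro Hq. assert (HP := PI_RGT_0).
  rewrite zeta_even_euler, zpow_double_sub1, Rpow_mult_distr, pow_inv by lra.
  unfold Binomial.C.
  transitivity ((-1) ^ (m + 1) * (-1) ^ (m + 1) * (bernoulli (2 * m)
    / (INR (fact (2 * j - 2 * m)) * INR (fact (2 * m)) * q ^ (2 * j - 2 * m)))).
  - field. neq0.
  - rewrite pow_neg1_sqr. field. neq0.
Qed.

Lemma zeta_even_term_pair j m q r : 0 < q ->
  INR (fact (2 * j)) / INR (fact (2 * j - 2 * m))
    * ((-1) ^ (m + 1) / (zpow 2 (2 * Z.of_nat m - 1) * PI ^ (2 * m)))
    * (1 + r ^ (2 * j - 2 * m)) * (zeta_even m / q ^ (2 * j - 2 * m))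
  = Binomial.C (2 * j) (2 * m) * bernoulli (2 * m) * (/ q) ^ (2 * j - 2 * m)
    + Binomial.C (2 * j) (2 * m) * bernoulli (2 * m) * (r / q) ^ (2 * j - 2 * m).
Proof.
  intro Hq. assert (HP := PI_RGT_0).
  assert (Hz : zpow 2 (2 * Z.of_nat m - 1) <> 0)
    by (rewrite zpow_double_sub1 by lra; assert (2 ^ (2 * m) <> 0) by neq0;
        intro E; field_simplify in E; lra).
  transitivity (INR (fact (2 * j)) * ((-1) ^ (m + 1) / (INR (fact (2 * j - 2 * m))
    * zpow 2 (2 * Z.of_nat m - 1) * q ^ (2 * j - 2 * m) * PI ^ (2 * m)) * zeta_even m)
    * (1 + r ^ (2 * j - 2 * m))); [field; neq0|].
  rewrite zeta_even_term by exact Hq. unfold Rdiv.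
  rewrite (Rpow_mult_distr r), pow_inv. field. neq0.
Qed.

Lemma zeta_identity_of_bernoulli_value q j L : (1 <= j)%nat -> 0 < q ->
  bernoulli_poly (2 * j) (/ q) = L * bernoulli (2 * j) / 2 ->
  L * zeta_even j =
    (-1) ^ j * INR j * (2 * PI) ^ (2 * j) / (INR (fact (2 * j)) * q ^ (2 * j - 1))
    + (-1) ^ (j + 1) * (2 * PI) ^ (2 * j) *
      sum_f_R0 (fun m => (-1) ^ (m + 1) /
        (INR (fact (2 * j - 2 * m)) * zpow 2 (2 * Z.of_nat m - 1)
          * q ^ (2 * j - 2 * m) * PI ^ (2 * m)) * zeta_even m) j.
Proof.
  intros Hj Hq HB. assert (HP := PI_RGT_0).
  rewrite (sum_eq _ (fun m => Binomial.C (2 * j) (2 * m) * bernoulli (2 * m)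
      * (/ q) ^ (2 * j - 2 * m) * / INR (fact (2 * j))))
    by (intros m _; apply zeta_even_term, Hq).
  rewrite <- scal_sum, sum_binomial_bernoulli_even, HB, zeta_even_euler, pow_add, pow_inv
    by exact Hj.
  field. neq0.
Qed.

Lemma zeta_identity_of_bernoulli_pair q r j L : (1 <= j)%nat -> 0 < q ->
  bernoulli_poly (2 * j) (/ q) + bernoulli_poly (2 * j) (r / q) =
    L * bernoulli (2 * j) / 2 ^ (2 * j) ->
  - (INR j / q ^ (2 * j - 1)) * (1 + r ^ (2 * j - 1))
    + sum_f_R0 (fun m => INR (fact (2 * j)) / INR (fact (2 * j - 2 * m))
        * ((-1) ^ (m + 1) / (zpow 2 (2 * Z.of_nat m - 1) * PI ^ (2 * m)))
        * (1 + r ^ (2 * j - 2 * m)) * (zeta_even m / q ^ (2 * j - 2 * m))) j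
  = L * INR (fact (2 * j)) * (-1) ^ (j + 1)
    / (2 ^ (4 * j - 1) * PI ^ (2 * j)) * zeta_even j.
Proof.
  intros Hj Hq HB. assert (HP := PI_RGT_0).
  rewrite (sum_eq _ _ _ (fun m _ => zeta_even_term_pair j m q r Hq)), sum_plus,
    !sum_binomial_bernoulli_even by exact Hj.
  replace (2 ^ (4 * j - 1)) with (2 ^ (2 * j) * 2 ^ (2 * j) / 2).
  2:{ rewrite <- pow_add. replace (2 * j + 2 * j)%nat with (S (4 * j - 1)) by lia.
      simpl. field. }
  transitivity (bernoulli_poly (2 * j) (/ q) + bernoulli_poly (2 * j) (r / q)).
  - unfold Rdiv. rewrite !Rpow_mult_distr, !pow_inv. field. neq0.
  - rewrite HB, zeta_even_euler, pow_add, Rpow_mult_distr.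
    transitivity ((-1) ^ j * (-1) ^ j * (L * bernoulli (2 * j) / 2 ^ (2 * j)));
      [rewrite pow_neg1_sqr; ring|].
    field. neq0.
Qed.

Theorem theorem1 : forall j : nat, (1 <= j)%nat ->
  (zpow 3 (1 - 2 * Z.of_nat j) - 1) * zeta_even j =
    (-1) ^ j * INR j * (2 * PI) ^ (2 * j) / (INR (fact (2 * j)) * 3 ^ (2 * j - 1))
    + (-1) ^ (j + 1) * (2 * PI) ^ (2 * j) *
      sum_f_R0 (fun m => (-1) ^ (m + 1) /
        (INR (fact (2 * j - 2 * m)) * zpow 2 (2 * Z.of_nat m - 1)
          * 3 ^ (2 * j - 2 * m) * PI ^ (2 * m)) * zeta_even m) j
  /\
  (zpow 4 (1 - 2 * Z.of_nat j) - zpow 2 (1 - 2 * Z.of_nat j)) * zeta_even j =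
    (-1) ^ j * INR j * (2 * PI) ^ (2 * j) / (INR (fact (2 * j)) * 4 ^ (2 * j - 1))
    + (-1) ^ (j + 1) * (2 * PI) ^ (2 * j) *
      sum_f_R0 (fun m => (-1) ^ (m + 1) /
        (INR (fact (2 * j - 2 * m)) * zpow 2 (2 * Z.of_nat m - 1)
          * 4 ^ (2 * j - 2 * m) * PI ^ (2 * m)) * zeta_even m) j
  /\
  (zpow 6 (1 - 2 * Z.of_nat j) - zpow 3 (1 - 2 * Z.of_nat j)
     - zpow 2 (1 - 2 * Z.of_nat j) + 1) * zeta_even j =
    (-1) ^ j * INR j * (2 * PI) ^ (2 * j) / (INR (fact (2 * j)) * 6 ^ (2 * j - 1))
    + (-1) ^ (j + 1) * (2 * PI) ^ (2 * j) *
      sum_f_R0 (fun m => (-1) ^ (m + 1) /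
        (INR (fact (2 * j - 2 * m)) * zpow 2 (2 * Z.of_nat m - 1)
          * 6 ^ (2 * j - 2 * m) * PI ^ (2 * m)) * zeta_even m) j
  /\
  - (INR j / 12 ^ (2 * j - 1)) * (1 + 7 ^ (2 * j - 1))
    + sum_f_R0 (fun m => INR (fact (2 * j)) / INR (fact (2 * j - 2 * m))
        * ((-1) ^ (m + 1) / (zpow 2 (2 * Z.of_nat m - 1) * PI ^ (2 * m)))
        * (1 + 7 ^ (2 * j - 2 * m)) * (zeta_even m / 12 ^ (2 * j - 2 * m))) j
  = (zpow 6 (1 - 2 * Z.of_nat j) - zpow 3 (1 - 2 * Z.of_nat j)
       - zpow 2 (1 - 2 * Z.of_nat j) + 1) * INR (fact (2 * j)) * (-1) ^ (j + 1)
    / (2 ^ (4 * j - 1) * PI ^ (2 * j)) * zeta_even j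
  /\
  - (INR j / 8 ^ (2 * j - 1)) * (1 + 5 ^ (2 * j - 1))
    + sum_f_R0 (fun m => INR (fact (2 * j)) / INR (fact (2 * j - 2 * m))
        * ((-1) ^ (m + 1) / (zpow 2 (2 * Z.of_nat m - 1) * PI ^ (2 * m)))
        * (1 + 5 ^ (2 * j - 2 * m)) * (zeta_even m / 8 ^ (2 * j - 2 * m))) j
  = (zpow 4 (1 - 2 * Z.of_nat j) - zpow 2 (1 - 2 * Z.of_nat j))
      * INR (fact (2 * j)) * (-1) ^ (j + 1)
    / (2 ^ (4 * j - 1) * PI ^ (2 * j)) * zeta_even j.
Proof.
  intros j Hj.
  assert (H2 := bernoulli_poly_half j). assert (H3 := bernoulli_poly_third j).
  assert (H4 := bernoulli_poly_quarter j). assert (H6 := bernoulli_poly_sixth j).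
  assert (H12 := bernoulli_poly_twelfths j). assert (H8 := bernoulli_poly_eighths j).
  assert (P2 : 0 < 2 ^ (2 * j)) by (apply pow_lt; lra).
  assert (P3 : 0 < 3 ^ (2 * j)) by (apply pow_lt; lra).
  assert (E4 : 4 ^ (2 * j) = 2 ^ (2 * j) * 2 ^ (2 * j))
    by (rewrite <- Rpow_mult_distr; f_equal; ring).
  assert (E6 : 6 ^ (2 * j) = 2 ^ (2 * j) * 3 ^ (2 * j))
    by (rewrite <- Rpow_mult_distr; f_equal; ring).
  rewrite !zpow_1_sub_double, E4, E6 by lra.
  split; [|split; [|split; [|split]]].
  - apply zeta_identity_of_bernoulli_value; [exact Hj | lra |]. rewrite H3. field. lra.
  - apply zeta_identity_of_bernoulli_value; [exact Hj | lra |]. rewrite H4, H2. field. lra.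
  - apply zeta_identity_of_bernoulli_value; [exact Hj | lra |]. rewrite H6, H3. field. lra.
  - apply zeta_identity_of_bernoulli_pair; [exact Hj | lra |]. rewrite H12, H6, H3. field. lra.
  - apply zeta_identity_of_bernoulli_pair; [exact Hj | lra |]. rewrite H8, H4, H2. field. lra.
Qed.
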